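(* Let $t>0$ be such that $I(t)$ has nonempty interior, $I(t)=[l(t),r(t)]$ with $l(t)<r(t)$. Then: (1) $F(x,t)=G(x,t)=0$ for all $x\in I(t)$; (2) $\tau_*(x,t)=\tau^*(x,t)=0$ for $x\in(l(t),r(t)]$, and $\tau_*(l(t),t)=0$; (3) $y_*(x,t)=y^*(x,t)=0$ for $x\in[l(t),r(t))$, and $y_*(r(t),t)=0$; (4) for all $0<t'<t$, $I(t')$ has nonempty interior; (5) the set $\{(x,t'):0\le t'\le t,\ x\in I(t')\}$ is star-shaped with respect to $(0,0)$.
   Context: Standing assumptions: $u_0,u_b:[0,\infty)\to\mathbb{R}$ bounded measurable with $u_b>0$; $\rho_0,\rho_b:[0,\infty)\to(0,\infty)$ positive locally bounded measurable. For $x,t,y,\tau\ge0$: $F(y,x,t)=\int_0^y[tu_0(\eta)+\eta-x]\rho_0(\eta)\,d\eta$, $G(\tau,x,t)=\int_0^\tau[x-u_b(\eta)(t-\eta)]\rho_b(\eta)u_b(\eta)\,d\eta$, $F(x,t)=\min_{y\ge0}F(y,x,t)$, $G(x,t)=\min_{\tau\ge0}G(\tau,x,t)$ (minima attained); $y_*\le y^*$ smallest/largest minimizers of $F(\cdot,x,t)$, $\tau_*\le\tau^*$ those of $G(\cdot,x,t)$. For fixed $t$, $F(\cdot,t)$ is decreasing and $G(\cdot,t)$ increasing in $x$, so $I(t)=\{x\ge0:F(x,t)=G(x,t)\}$ is a closed (possibly empty or one-point) interval, written $[l(t),r(t)]$ when nonempty. *)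

From HB Require Import structures.
From mathcomp Require Import all_boot all_order all_algebra.
From mathcomp Require Import all_classical all_reals all_analysis.
Set Implicit Arguments. Unset Strict Implicit. Unset Printing Implicit Defensive.
Import Order.TTheory GRing.Theory Num.Theory.
Import numFieldNormedType.Exports.
Local Open Scope classical_set_scope.
Local Open Scope ring_scope.

Section Defs.
Variable R : realType.
Let mu := (@lebesgue_measure R).

Definition halfline : set R := [set z | 0 <= z].

Definition Fyxt (u0 rho0 : R -> R) (y x t : R) : R :=
  Rintegral mu `[0, y] (fun eta => (t * u0 eta + eta - x) * rho0 eta).

Definition Gtxt (ub rhob : R -> R) (tau x t : R) : R :=
  Rintegral mu `[0, tau] (fun eta => (x - ub eta * (t - eta)) * rhob eta * ub eta).

(* F(x,t) = min_{y >= 0} F(y,x,t), G(x,t) = min_{tau >= 0} G(tau,x,t)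
   (the minima are attained, so the infimum is the minimum) *)
Definition Fxt u0 rho0 (x t : R) : R := inf [set Fyxt u0 rho0 y x t | y in halfline].
Definition Gxt ub rhob (x t : R) : R := inf [set Gtxt ub rhob tau x t | tau in halfline].

Definition Fargmin u0 rho0 (x t : R) : set R :=
  [set y | 0 <= y /\ Fyxt u0 rho0 y x t = Fxt u0 rho0 x t].
Definition Gargmin ub rhob (x t : R) : set R :=
  [set tau | 0 <= tau /\ Gtxt ub rhob tau x t = Gxt ub rhob x t].

Definition y_low u0 rho0 x t : R := inf (Fargmin u0 rho0 x t).
Definition y_up u0 rho0 x t : R := sup (Fargmin u0 rho0 x t).
Definition tau_low ub rhob x t : R := inf (Gargmin ub rhob x t).
Definition tau_up ub rhob x t : R := sup (Gargmin ub rhob x t).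

Definition Iset u0 rho0 ub rhob (t : R) : set R :=
  [set x | 0 <= x /\ Fxt u0 rho0 x t = Gxt ub rhob x t].

End Defs.

From HB Require Import structures.
From mathcomp Require Import all_boot all_order all_algebra.
From mathcomp Require Import all_classical all_reals all_analysis.
From mathcomp Require Import ring lra.
Import Order.TTheory GRing.Theory Num.Theory.
Import numFieldNormedType.Exports.
Local Open Scope classical_set_scope.
Local Open Scope ring_scope.

Set Implicit Arguments.
Unset Strict Implicit.
Unset Printing Implicit Defensive.

(* F(y,x,t) = t mom0(y) + fmom0(y) - x mass0(y) and
   G(tau,x,t) = x massb(tau) - t momb(tau) + fmomb(tau) are affine in (x,t), with
   mass0, massb positive away from 0 and fmom0, fmomb >= 0.  Hence F(x,t) is
   nonincreasing and G(x,t) nondecreasing in x, both are <= 0 (take y = tau = 0),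
   and on I(t) = [l,r] both equal one constant c.  The bounds
   G(tau,r,t) >= -t (sup ub) massb(tau) (from momb <= (sup ub) massb) and
   G(tau,r,t) >= c + (r-l) massb(tau) together give G(r,t) > c unless c = 0.
   A minimiser tau > 0 at x > l, or y > 0 at x < r, would then make
   G(tau,l,t) < 0, resp. F(y,r,t) < 0.  Finally fmom0, fmomb >= 0 give
   k F(y,x,t) <= F(y,kx,kt) for 0 <= k <= 1, and likewise for G, so the common
   zeros of F and G form a star-shaped set; comparing x with (s/t) l and (s/t) r
   puts every point of I(s), s <= t, into it, which yields (4) and (5). *)

Section measurable_locbdd.
Variable R : realType.
Implicit Types f g : R -> R.

Definition measurable_locbdd f :=
  measurable_fun (@halfline R) f /\
  forall c, exists M, forall z, 0 <= z <= c -> `|f z| <= M.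

Lemma measurable_halfline : measurable (@halfline R).
Proof.
rewrite (_ : @halfline R = `[0, +oo[%classic); first exact: measurable_itv.
by apply/seteqP; split => z; rewrite /= in_itv /= andbT.
Qed.

Lemma measurable_locbdd_cst c : measurable_locbdd (fun=> c).
Proof. by split; [exact: measurable_cst | exists `|c|]. Qed.

Lemma measurable_locbdd_id : measurable_locbdd (fun z => z).
Proof.
split; first exact: measurable_id.
by move=> c; exists `|c| => z /andP[z0 zc]; rewrite !ger0_norm ?(le_trans z0).
Qed.

Lemma measurable_locbddD f g : measurable_locbdd f -> measurable_locbdd g ->
  measurable_locbdd (fun z => f z + g z).
Proof.
move=> [mf bf] [mg bg]; split; first exact: measurable_realfun.measurable_funD.
move=> c; have [M fM] := bf c; have [N gN] := bg c; exists (M + N) => z zc.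
by rewrite (le_trans (ler_normD _ _)) // lerD ?fM ?gN.
Qed.

Lemma measurable_locbddB f g : measurable_locbdd f -> measurable_locbdd g ->
  measurable_locbdd (fun z => f z - g z).
Proof.
move=> [mf bf] [mg bg]; split; first exact: measurable_realfun.measurable_funB.
move=> c; have [M fM] := bf c; have [N gN] := bg c; exists (M + N) => z zc.
by rewrite (le_trans (ler_normB _ _)) // lerD ?fM ?gN.
Qed.

Lemma measurable_locbddM f g : measurable_locbdd f -> measurable_locbdd g ->
  measurable_locbdd (fun z => f z * g z).
Proof.
move=> [mf bf] [mg bg]; split; first exact: measurable_realfun.measurable_funM.
move=> c; have [M fM] := bf c; have [N gN] := bg c; exists (M * N) => z zc.
by rewrite normrM ler_pM ?fM ?gN.
Qed.

Lemma measurable_locbdd_norm f : measurable_locbdd f ->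
  measurable_locbdd (fun z => `|f z|).
Proof.
move=> [mf bf]; split; first exact: measurableT_comp mf.
by move=> c; have [M fM] := bf c; exists M => z zc; rewrite normr_id fM.
Qed.

Lemma measurable_locbdd_bounded f : measurable_fun (@halfline R) f ->
  (exists M, forall z, 0 <= z -> `|f z| <= M) -> measurable_locbdd f.
Proof. by move=> mf [M fM]; split=> // c; exists M => z /andP[/fM]. Qed.

Lemma measurable_locbdd_pos f : measurable_fun (@halfline R) f ->
  (forall z, 0 <= z -> 0 < f z) ->
  (forall c, exists M, forall z, 0 <= z <= c -> f z <= M) ->
  measurable_locbdd f.
Proof.
move=> mf f_gt0 bf; split=> // c; have [M fM] := bf c; exists M => z zc.
by rewrite gtr0_norm ?fM // f_gt0 //; case/andP: zc.
Qed.

End measurable_locbdd.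

#[local] Hint Resolve measurable_locbdd_cst measurable_locbdd_id : core.
#[local] Hint Resolve measurable_locbddD measurable_locbddB : core.
#[local] Hint Resolve measurable_locbddM measurable_locbdd_norm : core.

Section halfline_integral.
Variable R : realType.
Local Notation mu := (@lebesgue_measure R).
Implicit Types (f g : R -> R) (a y : R).

Definition int0 f y : R := Rintegral mu `[0, y] f.

Lemma integrable_int0 f y : measurable_locbdd f ->
  mu.-integrable `[0, y] (EFin \o f).
Proof.
move=> [mf bf]; apply: measurable_bounded_integrable => //.
- have := lebesgue_measure_itv `[0, y]; rewrite /= => ->.
  by case: ifP; rewrite ?ltry.
- apply: measurable_funS mf => //; first exact: measurable_halfline.
  by move=> z /=; rewrite in_itv /= => /andP[].
- have [M fM] := bf y; exists M; split; first by rewrite num_real.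
  move=> N MN z /=; rewrite in_itv /= => zy.
  exact: le_trans (fM _ zy) (ltW MN).
Qed.

Lemma int0_at0 f : int0 f 0 = 0.
Proof. by rewrite /int0 set_itv1 Rintegral_set1. Qed.

Lemma int0_ge0 f y : (forall z, 0 <= z <= y -> 0 <= f z) -> 0 <= int0 f y.
Proof.
by move=> f0; apply: Rintegral_ge0 => z /=; rewrite in_itv /=; exact: f0.
Qed.

(* A zero integral would force [f = 0] a.e. on [[0, y]], of positive measure. *)
Lemma int0_gt0 f y : measurable_locbdd f -> 0 < y ->
  (forall z, 0 <= z <= y -> 0 < f z) -> 0 < int0 f y.
Proof.
move=> mlf y_gt0 f_gt0; rewrite lt_neqAle int0_ge0 ?andbT; last first.
  by move=> z /f_gt0/ltW.
apply/negP => /eqP int0_eq0.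
have fi := integrable_int0 y mlf.
have fin : (\int[mu]_(x in `[0%R, y]) (f x)%:E)%E \is a fin_num.
  exact: integrable_fin_num fi.
have int_eq0 : (\int[mu]_(x in `[0%R, y]) (f x)%:E = 0)%E.
  by rewrite -(fineK fin) -[fine _]/(int0 f y) -int0_eq0.
have int_abs_eq0 : (\int[mu]_(x in `[0%R, y]) `|(f x)%:E| = 0)%E.
  rewrite -int_eq0; apply: eq_integral => z; rewrite inE /= in_itv /= => zy.
  by rewrite ger0_norm // ltW // f_gt0.
move/integrableP: (fi) => [mf _].
have [|N [mN muN sN]] := (ae_eq_integral_abs mu _ mf).1 int_abs_eq0; first by [].
have : (mu `[0%R, y] <= mu N)%E.
  apply: le_measure; rewrite ?inE // => z zy.
  apply: sN => /= /(_ zy) [] /eqP; rewrite gt_eqF //.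
  by apply: f_gt0; move: zy; rewrite /= in_itv.
rewrite muN lebesgue_measure_itv /= lte_fin y_gt0 oppr0 adde0 lee_fin.
by rewrite leNgt y_gt0.
Qed.

Lemma le_int0 f g y : measurable_locbdd f -> measurable_locbdd g ->
  (forall z, 0 <= z <= y -> f z <= g z) -> int0 f y <= int0 g y.
Proof.
by move=> mf mg fg; apply: le_Rintegral => //; exact: integrable_int0.
Qed.

Lemma int0D f g y : measurable_locbdd f -> measurable_locbdd g ->
  int0 (fun z => f z + g z) y = int0 f y + int0 g y.
Proof. by move=> mf mg; apply: RintegralD => //; exact: integrable_int0. Qed.

Lemma int0B f g y : measurable_locbdd f -> measurable_locbdd g ->
  int0 (fun z => f z - g z) y = int0 f y - int0 g y.
Proof. by move=> mf mg; apply: RintegralB => //; exact: integrable_int0. Qed.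

Lemma int0Zl f k y : measurable_locbdd f ->
  int0 (fun z => k * f z) y = k * int0 f y.
Proof. by move=> mf; apply: RintegralZl => //; exact: integrable_int0. Qed.

Lemma le_int0_upper f a y : measurable_locbdd f -> 0 <= a <= y ->
  (forall z, a < z <= y -> 0 <= f z) -> int0 f a <= int0 f y.
Proof.
move=> mf /andP[a0 ay] f0.
rewrite -[int0 f y](subrK (int0 f a)) lerDr /int0.
rewrite (Rintegral_itvB (integrable_int0 y mf)) ?bnd_simp //.
by apply: Rintegral_ge0 => z /=; rewrite in_itv /=; exact: f0.
Qed.

Lemma int0_ge_oppr_norm f y : measurable_locbdd f ->
  - int0 (fun z => `|f z|) y <= int0 f y.
Proof.
move=> mf; rewrite lerNl.
rewrite (le_trans _ (le_normr_Rintegral _ (integrable_int0 y mf))) //.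
by rewrite -normrN ler_norm.
Qed.

Lemma int0_lbound f a : measurable_locbdd f -> 0 <= a ->
  (forall z, a <= z -> 0 <= f z) -> exists B, forall y, 0 <= y -> B <= int0 f y.
Proof.
move=> mf a0 f0; exists (- int0 (fun z => `|f z|) a) => y y0.
have [ya|ay] := leP y a.
  apply: le_trans _ (int0_ge_oppr_norm y mf); rewrite lerN2.
  by apply: le_int0_upper; auto; rewrite y0.
apply: le_trans (int0_ge_oppr_norm a mf) _.
by apply: le_int0_upper; rewrite ?a0 ?ltW // => z /andP[/ltW/f0].
Qed.

End halfline_integral.

Section halfline_inf.
Variable R : realType.
Implicit Types f : R -> R.

Lemma inf_halfline_le f y : (exists B, forall z, 0 <= z -> B <= f z) -> 0 <= y ->
  inf [set f z | z in @halfline R] <= f y.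
Proof.
move=> [B fB] y0; apply: ge_inf; last by exists y.
by exists B => _ [z z0 <-]; exact: fB.
Qed.

Lemma inf_halfline_ge f c : (forall z, 0 <= z -> c <= f z) ->
  c <= inf [set f z | z in @halfline R].
Proof.
move=> cf; apply: lb_le_inf; first by exists (f 0), 0 => //; rewrite /halfline /=.
by move=> _ [z z0 <-]; exact: cf.
Qed.

Lemma inf_lbound_mem (A : set R) x : A x -> lbound A x -> inf A = x.
Proof.
move=> Ax xA; apply/eqP; rewrite eq_le; apply/andP; split.
  by apply: ge_inf => //; exists x.
by apply: lb_le_inf => //; exists x.
Qed.

End halfline_inf.

Record admissible (R : realType) (u0 ub rho0 rhob : R -> R) : Prop := Admissible {
  measurable_u0 : measurable_fun (@halfline R) u0;
  measurable_ub : measurable_fun (@halfline R) ub;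
  measurable_rho0 : measurable_fun (@halfline R) rho0;
  measurable_rhob : measurable_fun (@halfline R) rhob;
  bounded_u0 : exists M : R, forall z : R, 0 <= z -> `|u0 z| <= M;
  bounded_ub : exists M : R, forall z : R, 0 <= z -> `|ub z| <= M;
  ub_gt0 : forall z : R, 0 <= z -> 0 < ub z;
  rho0_gt0 : forall z : R, 0 <= z -> 0 < rho0 z;
  rhob_gt0 : forall z : R, 0 <= z -> 0 < rhob z;
  locbdd_rho0 : forall c : R, exists M : R,
    forall z : R, 0 <= z <= c -> rho0 z <= M;
  locbdd_rhob : forall c : R, exists M : R,
    forall z : R, 0 <= z <= c -> rhob z <= M }.

Section minimization.
Variables (R : realType) (u0 ub rho0 rhob : R -> R).
Hypothesis A : admissible u0 ub rho0 rhob.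

Local Notation Fv := (Fyxt u0 rho0).
Local Notation Gv := (Gtxt ub rhob).
Local Notation Fm := (Fxt u0 rho0).
Local Notation Gm := (Gxt ub rhob).
Local Notation I := (Iset u0 rho0 ub rhob).

Let mlb_u0 : measurable_locbdd u0 :=
  measurable_locbdd_bounded (measurable_u0 A) (bounded_u0 A).
Let mlb_ub : measurable_locbdd ub :=
  measurable_locbdd_bounded (measurable_ub A) (bounded_ub A).
Let mlb_rho0 : measurable_locbdd rho0 :=
  measurable_locbdd_pos (measurable_rho0 A) (rho0_gt0 A) (locbdd_rho0 A).
Let mlb_rhob : measurable_locbdd rhob :=
  measurable_locbdd_pos (measurable_rhob A) (rhob_gt0 A) (locbdd_rhob A).
#[local] Hint Resolve mlb_u0 mlb_ub mlb_rho0 mlb_rhob : core.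

Definition mass0 := int0 rho0.
Definition mom0 := int0 (fun z => u0 z * rho0 z).
Definition fmom0 := int0 (fun z => z * rho0 z).
Definition massb := int0 (fun z => rhob z * ub z).
Definition momb := int0 (fun z => ub z * rhob z * ub z).
Definition fmomb := int0 (fun z => z * (ub z * rhob z * ub z)).

Lemma Fyxt_affine y x s : Fv y x s = s * mom0 y + fmom0 y - x * mass0 y.
Proof.
rewrite /mom0 /fmom0 /mass0 -!int0Zl -?int0D -?int0B; auto.
by rewrite /Fyxt /int0; apply: eq_Rintegral => z _; ring.
Qed.

Lemma Gtxt_affine y x s : Gv y x s = x * massb y - s * momb y + fmomb y.
Proof.
rewrite /massb /momb /fmomb -!int0Zl -?int0B -?int0D; auto.
by rewrite /Gtxt /int0; apply: eq_Rintegral => z _; ring.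
Qed.

Lemma Fyxt0 x s : Fv 0 x s = 0. Proof. exact: int0_at0. Qed.

Lemma Gtxt0 x s : Gv 0 x s = 0. Proof. exact: int0_at0. Qed.

Let rhob_ub_gt0 z : 0 <= z -> 0 < rhob z * ub z.
Proof. by move=> z0; rewrite mulr_gt0 ?(rhob_gt0 A) ?(ub_gt0 A). Qed.

Lemma mass0_ge0 y : 0 <= mass0 y.
Proof. by apply: int0_ge0 => z /andP[z0 _]; rewrite ltW ?(rho0_gt0 A). Qed.

Lemma mass0_gt0 y : 0 < y -> 0 < mass0 y.
Proof. by move=> y0; apply: int0_gt0 => // z /andP[z0 _]; rewrite (rho0_gt0 A). Qed.

Lemma fmom0_ge0 y : 0 <= fmom0 y.
Proof.
by apply: int0_ge0 => z /andP[z0 _]; rewrite mulr_ge0 // ltW ?(rho0_gt0 A).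
Qed.

Lemma massb_ge0 y : 0 <= massb y.
Proof. by apply: int0_ge0 => z /andP[z0 _]; rewrite ltW ?rhob_ub_gt0. Qed.

Lemma massb_gt0 y : 0 < y -> 0 < massb y.
Proof.
by move=> y0; apply: int0_gt0; auto => z /andP[z0 _]; rewrite rhob_ub_gt0.
Qed.

Lemma fmomb_ge0 y : 0 <= fmomb y.
Proof.
apply: int0_ge0 => z /andP[z0 _]; rewrite mulr_ge0 // -mulrA.
by apply/ltW/mulr_gt0; [exact: (ub_gt0 A) | exact: rhob_ub_gt0].
Qed.

Lemma momb_le_massb M y : (forall z, 0 <= z -> `|ub z| <= M) ->
  momb y <= M * massb y.
Proof.
move=> ubM; rewrite /massb -int0Zl; auto; apply: le_int0; auto.
move=> z /andP[z0 _]; rewrite -mulrA; apply: ler_wpM2r; first exact/ltW/rhob_ub_gt0.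
exact: le_trans (ler_norm _) (ubM _ z0).
Qed.

Lemma Fyxt_lbound x s : 0 <= s -> exists B, forall y, 0 <= y -> B <= Fv y x s.
Proof.
move=> s0; have [M u0M] := bounded_u0 A.
have M0 : 0 <= M := le_trans (normr_ge0 _) (u0M 0 (lexx 0)).
have a0 : 0 <= `|x| + s * M by rewrite addr_ge0 ?mulr_ge0.
apply: (int0_lbound _ a0) => [|z az]; first by auto.
have z0 : 0 <= z := le_trans a0 az.
apply: mulr_ge0; last exact/ltW/(rho0_gt0 A).
have /andP[u0_geN _] : - M <= u0 z <= M by rewrite -ler_norml u0M.
have : - (s * M) <= s * u0 z by rewrite -mulrN ler_wpM2l.
have := ler_norm x; lra.
Qed.

Lemma Gtxt_lbound x s : 0 <= x -> 0 <= s ->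
  exists B, forall y, 0 <= y -> B <= Gv y x s.
Proof.
move=> x0 s0; apply: (int0_lbound _ s0) => [|z sz]; first by auto 8.
have z0 : 0 <= z := le_trans s0 sz.
rewrite -mulrA; apply: mulr_ge0; last exact/ltW/rhob_ub_gt0.
have : ub z * (s - z) <= 0 by rewrite mulr_ge0_le0 ?subr_le0 // ltW ?(ub_gt0 A).
lra.
Qed.

Lemma Fxt_le x s y : 0 <= s -> 0 <= y -> Fm x s <= Fv y x s.
Proof. by move=> s0; apply: inf_halfline_le; exact: Fyxt_lbound. Qed.

Lemma Fxt_ge x s c : (forall y, 0 <= y -> c <= Fv y x s) -> c <= Fm x s.
Proof. exact: inf_halfline_ge. Qed.

Lemma Fxt_le0 x s : 0 <= s -> Fm x s <= 0.
Proof. by move=> s0; rewrite -(Fyxt0 x s) Fxt_le. Qed.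

Lemma Gxt_le x s y : 0 <= x -> 0 <= s -> 0 <= y -> Gm x s <= Gv y x s.
Proof. by move=> x0 s0; apply: inf_halfline_le; exact: Gtxt_lbound. Qed.

Lemma Gxt_ge x s c : (forall y, 0 <= y -> c <= Gv y x s) -> c <= Gm x s.
Proof. exact: inf_halfline_ge. Qed.

Lemma Gxt_le0 x s : 0 <= x -> 0 <= s -> Gm x s <= 0.
Proof. by move=> x0 s0; rewrite -(Gtxt0 x s) Gxt_le. Qed.

Lemma Fxt_nonincreasing s x x' : 0 <= s -> x <= x' -> Fm x' s <= Fm x s.
Proof.
move=> s0 xx'; apply: Fxt_ge => y y0; apply: le_trans (Fxt_le x' s0 y0) _.
have := ler_wpM2r (mass0_ge0 y) xx'; rewrite !Fyxt_affine; lra.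
Qed.

Lemma Gxt_nondecreasing s x x' : 0 <= x -> 0 <= s -> x <= x' -> Gm x s <= Gm x' s.
Proof.
move=> x0 s0 xx'; apply: Gxt_ge => y y0; apply: le_trans (Gxt_le x0 s0 y0) _.
have := ler_wpM2r (massb_ge0 y) xx'; rewrite !Gtxt_affine; lra.
Qed.

Lemma Fyxt_scale k y x s : 0 <= k <= 1 -> k * Fv y x s <= Fv y (k * x) (k * s).
Proof.
move=> /andP[k0 k1]; rewrite !Fyxt_affine mulrBr mulrDr !mulrA.
have := ler_piMl (fmom0_ge0 y) k1; lra.
Qed.

Lemma Gtxt_scale k y x s : 0 <= k <= 1 -> k * Gv y x s <= Gv y (k * x) (k * s).
Proof.
move=> /andP[k0 k1]; rewrite !Gtxt_affine mulrDr mulrBr !mulrA.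
have := ler_piMl (fmomb_ge0 y) k1; lra.
Qed.

Lemma Fxt_eq0_scale k x s : 0 <= s -> 0 <= k <= 1 ->
  Fm x s = 0 -> Fm (k * x) (k * s) = 0.
Proof.
move=> s0 k01 Fx0; have /andP[k0 _] := k01.
apply/eqP; rewrite eq_le Fxt_le0 ?mulr_ge0 //=; apply: Fxt_ge => y y0.
by apply: le_trans (Fyxt_scale y x s k01); rewrite mulr_ge0 // -Fx0 Fxt_le.
Qed.

Lemma Gxt_eq0_scale k x s : 0 <= x -> 0 <= s -> 0 <= k <= 1 ->
  Gm x s = 0 -> Gm (k * x) (k * s) = 0.
Proof.
move=> x0 s0 k01 Gx0; have /andP[k0 _] := k01.
apply/eqP; rewrite eq_le Gxt_le0 ?mulr_ge0 //=; apply: Gxt_ge => y y0.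
by apply: le_trans (Gtxt_scale y x s k01); rewrite mulr_ge0 // -Gx0 Gxt_le.
Qed.

Lemma Gxt_const_eq0 l r t : 0 <= l -> l < r -> 0 <= t -> Gm l t = Gm r t ->
  Gm r t = 0.
Proof.
move=> l0 lr t0 Glr; have r0 : 0 <= r := le_trans l0 (ltW lr).
have [M ubM] := bounded_ub A.
have tM0 : 0 <= t * M by rewrite mulr_ge0 // (le_trans _ (ubM 0 (lexx 0))).
have tMrl : 0 < t * M + (r - l) by rewrite ltr_wpDl // subr_gt0.
set c := Gm r t.
(* [(r - l)] times [G(tau,r,t) >= - t M massb(tau)] plus [t M] times
   [G(tau,r,t) >= c + (r - l) massb(tau)] eliminates [massb(tau)]. *)
have : t * M * c / (t * M + (r - l)) <= c.
  apply: Gxt_ge => tau tau0; rewrite ler_pdivrMr //.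
  have := Gxt_le l0 t0 tau0; rewrite Glr -/c !Gtxt_affine.
  have := ler_wpM2l t0 (momb_le_massb tau ubM).
  have := mulr_ge0 r0 (massb_ge0 tau); have := fmomb_ge0 tau.
  nra.
rewrite ler_pdivrMr // => tMc.
by apply/eqP; rewrite eq_le Gxt_le0 //=; nra.
Qed.

Lemma Iset_itv_eq0 t l r : 0 <= t -> l < r -> I t = `[l, r]%classic ->
  forall x, l <= x <= r -> Fm x t = 0 /\ Gm x t = 0.
Proof.
move=> t0 lr It.
have Ieq x : l <= x <= r -> 0 <= x /\ Fm x t = Gm x t.
  by move=> xlr; have : I t x by rewrite It /= in_itv /= xlr.
have lI : l <= l <= r by rewrite lexx ltW.
have rI : l <= r <= r by rewrite lexx ltW.
have [l0 FGl] := Ieq l lI; have [r0 FGr] := Ieq r rI.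
have Glr : Gm l t = Gm r t.
  apply/eqP; rewrite eq_le Gxt_nondecreasing ?(ltW lr) //=.
  by rewrite -FGl -FGr Fxt_nonincreasing ?(ltW lr).
have Gr0 := Gxt_const_eq0 l0 lr t0 Glr.
move=> x xlr; have [x0 FGx] := Ieq x xlr; have /andP[lx xr] := xlr.
suff Gx0 : Gm x t = 0 by rewrite FGx Gx0.
have := Gxt_nondecreasing l0 t0 lx; have := Gxt_nondecreasing x0 t0 xr.
lra.
Qed.

Lemma Iset_itv_ends t l r : 0 <= t -> l < r -> I t = `[l, r]%classic ->
  [/\ 0 <= l, Fm r t = 0 & Gm l t = 0].
Proof.
move=> t0 lr It; have FG0 := Iset_itv_eq0 t0 lr It.
have /FG0[_ Gl0] : l <= l <= r by rewrite lexx ltW.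
have /FG0[Fr0 _] : l <= r <= r by rewrite lexx ltW.
by split => //; have [] : I t l by rewrite It /= in_itv /= lexx ltW.
Qed.

Lemma Fargmin_eq0 x r t : x < r -> 0 <= t -> Fm r t = 0 -> Fm x t = 0 ->
  Fargmin u0 rho0 x t = [set 0].
Proof.
move=> xr t0 Fr0 Fx0; apply/seteqP; split => [y [y0 Fy] | _ ->] /=; last first.
  by split => //; rewrite Fyxt0 Fx0.
apply/eqP; rewrite eq_le y0 andbT leNgt; apply/negP => y_gt0.
have := Fxt_le r t0 y0; rewrite Fr0 Fx0 !Fyxt_affine in Fy *.
have : 0 < (r - x) * mass0 y by rewrite mulr_gt0 ?mass0_gt0 // subr_gt0.
lra.
Qed.

Lemma Gargmin_eq0 l x t : 0 <= l -> l < x -> 0 <= t -> Gm l t = 0 -> Gm x t = 0 ->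
  Gargmin ub rhob x t = [set 0].
Proof.
move=> l0 lx t0 Gl0 Gx0.
apply/seteqP; split => [tau [tau0 Gtau] | _ ->] /=; last first.
  by split => //; rewrite Gtxt0 Gx0.
apply/eqP; rewrite eq_le tau0 andbT leNgt; apply/negP => tau_gt0.
have := Gxt_le l0 t0 tau0; rewrite Gl0 Gx0 !Gtxt_affine in Gtau *.
have : 0 < (x - l) * massb tau by rewrite mulr_gt0 ?massb_gt0 // subr_gt0.
lra.
Qed.

Lemma y_low_eq0 x t : Fm x t = 0 -> y_low u0 rho0 x t = 0.
Proof.
move=> Fx0; apply: inf_lbound_mem; first by split => //; rewrite Fyxt0 Fx0.
by move=> y [].
Qed.

Lemma tau_low_eq0 x t : Gm x t = 0 -> tau_low ub rhob x t = 0.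
Proof.
move=> Gx0; apply: inf_lbound_mem; first by split => //; rewrite Gtxt0 Gx0.
by move=> tau [].
Qed.

Lemma Iset_scale k s x : 0 <= s -> 0 <= k <= 1 -> I s x -> Fm x s = 0 ->
  I (k * s) (k * x).
Proof.
move=> s0 k01 [x0 FGx] Fx0; have /andP[k0 _] := k01.
split; first by rewrite mulr_ge0.
by rewrite Fxt_eq0_scale // Gxt_eq0_scale // -FGx.
Qed.

(* With [k = s / t], star-shapedness makes [k r] a zero of [F(., s)] and [k l] one
   of [G(., s)]; [x] lies to the left of the first or to the right of the second. *)
Lemma Iset_le_eq0 t l r s x : 0 < t -> 0 <= l -> l <= r ->
  Fm r t = 0 -> Gm l t = 0 ->
  0 <= s <= t -> I s x -> Fm x s = 0 /\ Gm x s = 0.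
Proof.
move=> t_gt0 l0 lr Fr0 Gl0 /andP[s0 st] [x0 FGx]; have t0 := ltW t_gt0.
have k01 : 0 <= s / t <= 1 by rewrite divr_ge0 //= ler_pdivrMr // mul1r.
have kt : s / t * t = s by rewrite divfK ?gt_eqF.
have Fkr := Fxt_eq0_scale t0 k01 Fr0; rewrite kt in Fkr.
have Gkl := Gxt_eq0_scale l0 t0 k01 Gl0; rewrite kt in Gkl.
have [xkr|krx] := leP x (s / t * r).
  suff Fx0 : Fm x s = 0 by rewrite -FGx Fx0.
  by apply/eqP; rewrite eq_le Fxt_le0 //= -Fkr Fxt_nonincreasing.
suff Gx0 : Gm x s = 0 by rewrite FGx Gx0.
have k0 : 0 <= s / t by case/andP: k01.
have klx : s / t * l <= x by apply: le_trans (ltW krx); exact: ler_wpM2l.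
apply/eqP; rewrite eq_le Gxt_le0 //= -Gkl.
exact: Gxt_nondecreasing (mulr_ge0 k0 l0) s0 klx.
Qed.

Lemma Iset_star t l r x s k : 0 < t -> l < r -> I t = `[l, r]%classic ->
  0 <= s <= t -> I s x -> 0 <= k <= 1 -> 0 <= k * s <= t /\ I (k * s) (k * x).
Proof.
move=> t_gt0 lr It st Isx k01; have /andP[s0 s_le_t] := st.
have /andP[k0 k1] := k01; have [l0 Fr0 Gl0] := Iset_itv_ends (ltW t_gt0) lr It.
have [Fx0 _] := Iset_le_eq0 t_gt0 l0 (ltW lr) Fr0 Gl0 st Isx.
split; last exact: Iset_scale.
by rewrite mulr_ge0 //= (le_trans _ s_le_t) // ler_piMl.
Qed.

Lemma Iset_interior t l r t' : 0 < t -> l < r -> I t = `[l, r]%classic ->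
  0 < t' < t -> (I t')° !=set0.
Proof.
move=> t_gt0 lr It /andP[t'0 t't]; set k := t' / t.
have k0 : 0 < k by rewrite divr_gt0.
have k01 : 0 <= k <= 1 by rewrite ltW //= ler_pdivrMr // mul1r ltW.
have kt : k * t = t' by rewrite divfK ?gt_eqF.
have sub : `[k * l, k * r]%classic `<=` I t'.
  move=> z /=; rewrite in_itv /= => /andP[klz zkr].
  have zI : I t (z / k).
    by rewrite It /= in_itv /= ler_pdivlMr ?ler_pdivrMr // ![_ * k]mulrC klz zkr.
  have tI : 0 <= t <= t by rewrite lexx ltW.
  by have [_] := Iset_star t_gt0 lr It tI zI k01; rewrite kt mulrC divfK ?gt_eqF.
exists (k * ((l + r) / 2)); apply: (interiorS sub).
rewrite interior_itv_bnd /= in_itv /= !ltr_pM2l //; lra.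
Qed.

End minimization.

Theorem lemma2p7 (R : realType) (u0 ub rho0 rhob : R -> R)
  (mu0 : measurable_fun (@halfline R) u0)
  (mub : measurable_fun (@halfline R) ub)
  (mrho0 : measurable_fun (@halfline R) rho0)
  (mrhob : measurable_fun (@halfline R) rhob)
  (bu0 : exists M : R, forall z : R, 0 <= z -> `|u0 z| <= M)
  (bub : exists M : R, forall z : R, 0 <= z -> `|ub z| <= M)
  (ub_pos : forall z : R, 0 <= z -> 0 < ub z)
  (rho0_pos : forall z : R, 0 <= z -> 0 < rho0 z)
  (rhob_pos : forall z : R, 0 <= z -> 0 < rhob z)
  (lb_rho0 : forall c : R, exists M : R, forall z : R, 0 <= z <= c -> rho0 z <= M)
  (lb_rhob : forall c : R, exists M : R, forall z : R, 0 <= z <= c -> rhob z <= M)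
  (t l r : R) (t_pos : 0 < t) (lr : l < r)
  (It : Iset u0 rho0 ub rhob t = `[l, r]%classic) :
  [/\ (forall x, l <= x <= r ->
         Fxt u0 rho0 x t = 0 /\ Gxt ub rhob x t = 0),
      (forall x, l < x <= r ->
         tau_low ub rhob x t = 0 /\ tau_up ub rhob x t = 0)
      /\ tau_low ub rhob l t = 0,
      (forall x, l <= x < r ->
         y_low u0 rho0 x t = 0 /\ y_up u0 rho0 x t = 0)
      /\ y_low u0 rho0 r t = 0,
      (forall t', 0 < t' < t ->
         (Iset u0 rho0 ub rhob t')° !=set0) &
      (forall (x s lam : R), 0 <= s <= t -> Iset u0 rho0 ub rhob s x ->
         0 <= lam <= 1 ->
         0 <= lam * s <= t /\ Iset u0 rho0 ub rhob (lam * s) (lam * x))].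
Proof.
have A : admissible u0 ub rho0 rhob by split.
have t0 := ltW t_pos.
have FG0 := Iset_itv_eq0 A t0 lr It.
have [l0 Fr0 Gl0] := Iset_itv_ends A t0 lr It.
split => //.
- split=> [x /andP[lx xr] | ]; last exact: tau_low_eq0.
  have /FG0[_ Gx0] : l <= x <= r by rewrite ltW.
  by rewrite /tau_low /tau_up (Gargmin_eq0 A l0 lx t0 Gl0 Gx0) inf1 sup1.
- split=> [x /andP[lx xr] | ]; last exact: y_low_eq0.
  have /FG0[Fx0 _] : l <= x <= r by rewrite lx ltW.
  by rewrite /y_low /y_up (Fargmin_eq0 A xr t0 Fr0 Fx0) inf1 sup1.
- move=> t'; exact (Iset_interior A t_pos lr It).
- move=> x s k; exact (Iset_star A t_pos lr It).
Qed.
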